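(* Consider the explicit mass update of the kinetic finite volume scheme for the $N$-layer Saint-Venant system with mass exchange, as described in the context. Assume that the function $\chi$ has compact support contained in $[-w_M,w_M]$. Fix $n$ and suppose $H_i^n\ge0$ for all $i$. If the time step $\Delta t^n>0$ satisfies, for every layer $\alpha\in\{1,\dots,N\}$ and every cell $i$, $$\Delta t^n\le\frac{l_\alpha H_i^n\,\Delta x_i}{l_\alpha H_i^n\big(|u^n_{\alpha,i}|+w_M c_i^n\big)+\Delta x_i\big([G^{n+1/2}_{\alpha+1/2,i}]_-+[G^{n+1/2}_{\alpha-1/2,i}]_+\big)}$$ (ratios with zero denominator being omitted), then $H_i^{n+1}\ge0$ for all $i$. Consequently, if this CFL condition holds at every time step and $H_i^0\ge0$ for all $i$, then $H_i^n\ge0$ for all $i$ and $n$. This condition does not depend on the bottom slope.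
   Context: Let $g>0$, $N\ge1$, and $l_1,\dots,l_N\ge0$ with $\sum_\alpha l_\alpha=1$. The real line is partitioned into cells $C_i$ of lengths $\Delta x_i>0$; $\sigma_i^n=\Delta t^n/\Delta x_i$. At time level $n$ the discrete unknowns are the total water heights $H_i^n\ge0$ and arbitrary real layer velocities $u^n_{\alpha,i}$. Let $\chi:\mathbb{R}\to\mathbb{R}$ satisfy $\chi(-w)=\chi(w)\ge0$, $\int\chi=\int w^2\chi=1$. Set $c_i^n=\sqrt{gH_i^n/2}$ and define the discrete Gibbs densities $M^n_{\alpha,i}(\xi)=\frac{l_\alpha H_i^n}{c_i^n}\chi\big(\frac{\xi-u^n_{\alpha,i}}{c_i^n}\big)$ (with $M^n_{\alpha,i}\equiv0$ if $H_i^n=0$). Define $F^{\pm}_{h_\alpha}(X_i)=\int_{\pm\xi\ge0}\xi M^n_{\alpha,i}(\xi)\,d\xi$ (with $\xi<0$ for the minus sign), and $\mathcal F^n_{h_\alpha,i}=F^+_{h_\alpha}(X_i)+F^-_{h_\alpha}(X_{i+1})-F^+_{h_\alpha}(X_{i-1})-F^-_{h_\alpha}(X_i)$. The mass exchange terms are $G^{n+1/2}_{1/2,i}=G^{n+1/2}_{N+1/2,i}=0$ and, for $\alpha=1,\dots,N$, $$\Delta x_i\,G^{n+1/2}_{\alpha+1/2,i}=\sum_{j=1}^{\alpha}\Big(\mathcal F^n_{h_j,i}-l_j\sum_{p=1}^N\mathcal F^n_{h_p,i}\Big).$$ The new total height is $H_i^{n+1}=H_i^n-\sigma_i^n\sum_{\alpha=1}^N\mathcal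 F^n_{h_\alpha,i}$ (the topographic source term and the implicit viscosity/friction step do not modify $H$). Notation: $[a]_+=\max(0,a)$, $[a]_-=\max(0,-a)$. *)

From HB Require Import structures.
From mathcomp Require Import all_boot all_order all_algebra.
From mathcomp Require Import all_classical all_reals all_analysis.
Set Implicit Arguments. Unset Strict Implicit. Unset Printing Implicit Defensive.
Import Order.TTheory GRing.Theory Num.Theory.
Local Open Scope ring_scope.
Local Open Scope classical_set_scope.

Section Scheme.
Variables (R : realType) (g : R) (N : nat) (l : nat -> R) (chi : R -> R).
(* cells are indexed by i : int, layers by alpha in {1,..,N} *)
Variables (dx : int -> R) (H : int -> R) (u : nat -> int -> R).

Definition cel (i : int) : R := Num.sqrt (g * H i / 2).

Definition Mgibbs (alpha : nat) (i : int) (xi : R) : R :=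
  if H i == 0 then 0
  else l alpha * H i / cel i * chi ((xi - u alpha i) / cel i).

Definition Fplus (alpha : nat) (i : int) : R :=
  fine (\int[@lebesgue_measure R]_(xi in [set xi : R | (0 <= xi)%R])
          ((xi * Mgibbs alpha i xi)%R)%:E)%E.

Definition Fminus (alpha : nat) (i : int) : R :=
  fine (\int[@lebesgue_measure R]_(xi in [set xi : R | (xi < 0)%R])
          ((xi * Mgibbs alpha i xi)%R)%:E)%E.

Definition Flux (alpha : nat) (i : int) : R :=
  Fplus alpha i + Fminus alpha (i + 1) - Fplus alpha (i - 1) - Fminus alpha i.

(* Gex a i = G^{n+1/2}_{a+1/2,i}, for a = 0..N; zero for a = 0 and a = N *)
Definition Gex (a : nat) (i : int) : R :=
  if (a == 0%N) || (N <= a)%N then 0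
  else (dx i)^-1 * \sum_(1 <= j < a.+1)
         (Flux j i - l j * \sum_(1 <= p < N.+1) Flux p i).

Definition Hnew (dt : R) (i : int) : R :=
  H i - dt / dx i * \sum_(1 <= alpha < N.+1) Flux alpha i.

Definition CFL (wM dt : R) : Prop :=
  forall (alpha : nat) (i : int), (1 <= alpha <= N)%N ->
    let den := l alpha * H i * (`|u alpha i| + wM * cel i)
               + dx i * (Num.max 0 (- Gex alpha i) + Num.max 0 (Gex alpha.-1 i)) in
    den != 0 -> dt <= l alpha * H i * dx i / den.

End Scheme.

From mathcomp Require Import all_boot all_order all_algebra.
From mathcomp Require Import all_classical all_reals all_analysis measurable_realfun.
From mathcomp Require Import lra ring.
Import Order.TTheory GRing.Theory Num.Theory.
Local Open Scope ring_scope.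
Local Open Scope classical_set_scope.

(** Multiplying the update by [1 = \sum_a l_a], the definition of the exchange
    terms turns the contribution of layer [a] into
    [l_a H_i - sigma_i (F_{h_a,i} - dx_i G_{a+1/2,i} + dx_i G_{a-1/2,i})].
    The Gibbs density of layer [a] in cell [i] has mass [l_a H_i] and lives on
    [|xi - u_{a,i}| <= w_M c_i], so the outgoing half-fluxes of cell [i] are bounded by
    [l_a H_i (|u_{a,i}| + w_M c_i)], while the incoming ones have the favourable sign.
    The CFL condition is exactly what makes every layer contribution nonnegative. *)

Section affine_change_of_variable.
Context {R : realType} (u c : R).
Hypothesis c_gt0 : 0 < c.
Local Notation mu := (@lebesgue_measure R).

Definition standardize (x : R) : R := (x - u) / c.

Lemma measurable_standardize : measurable_fun setT standardize.
Proof. by apply: measurable_funM => //; exact: measurable_funB. Qed.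

Lemma standardize_preimage_itv (a b : R) :
  standardize @^-1` `]a, b] = `](c * a + u), (c * b + u)].
Proof.
apply/seteqP; split => x /=; rewrite !in_itv /= /standardize;
  by rewrite ltr_pdivlMr // ler_pdivrMr // => /andP[? ?]; apply/andP; split; lra.
Qed.

Local Open Scope ereal_scope.

Lemma pushforward_standardize (A : set R) : measurable A ->
  pushforward mu standardize A = c%:E * mu A.
Proof.
move=> mA; have invc_ge0 : (0 <= c^-1)%R by rewrite invr_ge0 ltW.
(* The measure structure of a pushforward depends on a measurability proof
   that unification cannot find, hence the explicit (un)shelving here and below. *)
unshelve have := @lebesgue_measure_unique R (mscale (NngNum invc_ge0)
  (pushforward mu (standardize : measurableTypeR R -> measurableTypeR R))) _ A mA.
move=> /(_ measurable_standardize) -> //=; last first.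
  move=> _ [[a b] _ <-] /=.
  rewrite /mscale /= /pushforward standardize_preimage_itv !lebesgue_measure_itv /=.
  rewrite !lte_fin ltrD2r ltr_pM2l //.
  case: (a < b)%R; rewrite -EFinM; congr EFin; last by rewrite !mulr0.
  by field; rewrite gt_eqF.
by rewrite /mscale /= muleA -EFinM mulfV ?gt_eqF // mul1e.
Qed.

Lemma ge0_integral_standardize (f : R -> \bar R) :
  measurable_fun setT f -> (forall x, 0 <= f x) ->
  \int[mu]_x f (standardize x) = c%:E * \int[mu]_x f x.
Proof.
move=> mf f0.
have := @ge0_integral_pushforward _ _ _ _ R
  (standardize : measurableTypeR R -> measurableTypeR R) measurable_standardize
  mu setT f measurableT mf.
rewrite preimage_setT => <-; last by move=> *; exact: f0.
have c_ge0 : (0 <= c)%R by exact: ltW.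
rewrite -(ge0_integral_mscale mu measurableT (NngNum c_ge0) mf) //.
apply (eq_measure_integral (mscale (NngNum c_ge0) mu)) => A mA _.
exact: pushforward_standardize.
Unshelve. exact: measurable_standardize.
Qed.
End affine_change_of_variable.

Lemma ge0_fineD_le (R : realType) (a b : \bar R) (r : R) :
  (0 <= a)%E -> (0 <= b)%E -> (a + b <= r%:E)%E -> fine a + fine b <= r.
Proof. by case: a => [x| |]; case: b => [y| |]. Qed.

Section half_lines.
Context {R : realType}.
Local Notation mu := (@lebesgue_measure R).

Lemma measurable_half_line_ge0 : measurable [set xi : R | (0 <= xi)%R].
Proof.
rewrite (_ : [set xi | _] = `[0, +oo[%classic); first exact: measurable_itv.
by apply/seteqP; split => x /=; rewrite in_itv /= andbT.
Qed.

Lemma measurable_half_line_lt0 : measurable [set xi : R | (xi < 0)%R].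
Proof.
rewrite (_ : [set xi | _] = `]-oo, 0[%classic); first exact: measurable_itv.
by apply/seteqP; split => x /=; rewrite in_itv.
Qed.

Lemma ge0_integral_half_lines (f : R -> \bar R) :
  measurable_fun setT f -> (forall xi, (0 <= f xi)%E) ->
  (\int[mu]_(xi in [set xi : R | (0 <= xi)%R]) f xi
   + \int[mu]_(xi in [set xi : R | (xi < 0)%R]) f xi = \int[mu]_xi f xi)%E.
Proof.
move=> mf f0; rewrite -ge0_integral_setU //.
- congr integral; apply/seteqP; split => // xi _ /=.
  by case: (leP 0 xi) => ?; [left | right].
- exact: measurable_half_line_ge0.
- exact: measurable_half_line_lt0.
- exact: measurable_funTS.
- rewrite disj_set2E; apply/eqP/seteqP; split => xi //= [? ?]; lra.
Qed.

End half_lines.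

Section half_fluxes.
Context {R : realType} (M : R -> R).
Local Notation mu := (@lebesgue_measure R).

(* [Fplus] and [Fminus] are these fluxes for the Gibbs densities [Mgibbs]. *)
Definition kinetic_flux_pos : R :=
  fine (\int[mu]_(xi in [set xi : R | (0 <= xi)%R]) ((xi * M xi)%R)%:E)%E.
Definition kinetic_flux_neg : R :=
  fine (\int[mu]_(xi in [set xi : R | (xi < 0)%R]) ((xi * M xi)%R)%:E)%E.

Hypothesis M_ge0 : forall xi, 0 <= M xi.

Lemma kinetic_flux_pos_ge0 : 0 <= kinetic_flux_pos.
Proof.
apply: fine_ge0; apply: integral_ge0 => xi /= xi_ge0.
by rewrite lee_fin mulr_ge0.
Qed.

Lemma kinetic_flux_negE : kinetic_flux_neg =
  - fine (\int[mu]_(xi in [set xi : R | (xi < 0)%R]) ((- xi * M xi)%R)%:E)%E.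
Proof.
rewrite /kinetic_flux_neg -fineN -integral_ge0N.
  by congr fine; apply: eq_integral => xi _; rewrite -EFinN mulNr opprK.
by move=> xi /= xi_lt0; rewrite lee_fin mulr_ge0 // oppr_ge0 ltW.
Qed.

Lemma kinetic_flux_neg_le0 : kinetic_flux_neg <= 0.
Proof.
rewrite kinetic_flux_negE oppr_le0; apply: fine_ge0; apply: integral_ge0 => xi /= xi_lt0.
by rewrite lee_fin mulr_ge0 // oppr_ge0 ltW.
Qed.

Variables (K m : R).
Hypotheses (mM : measurable_fun setT M) (K_ge0 : 0 <= K).
Hypothesis integral_M : (\int[mu]_xi (M xi)%:E = m%:E)%E.
Hypothesis speed_bound : forall xi, `|xi| * M xi <= K * M xi.

Lemma integral_weighted_le (D : set R) (s : R -> R) :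
  measurable D -> measurable_fun setT s -> (forall xi, D xi -> 0 <= s xi <= `|xi|) ->
  (\int[mu]_(xi in D) ((s xi * M xi)%R)%:E <= \int[mu]_(xi in D) (K%:E * (M xi)%:E))%E.
Proof.
move=> mD ms s_bound; apply: ge0_le_integral => //.
- by move=> xi /s_bound /andP[? _]; rewrite lee_fin mulr_ge0.
- by apply/measurable_EFinP/measurable_funTS; exact: measurable_funM.
- by apply/measurable_EFinP/measurable_funTS; exact: measurable_funM.
- move=> xi /s_bound /andP[_ s_le]; rewrite -EFinM lee_fin.
  exact: le_trans (ler_wpM2r (M_ge0 xi) s_le) (speed_bound xi).
Qed.

Lemma kinetic_flux_pos_sub_neg_le : kinetic_flux_pos - kinetic_flux_neg <= K * m.
Proof.
rewrite kinetic_flux_negE opprK /kinetic_flux_pos.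
apply: ge0_fineD_le.
- by apply: integral_ge0 => xi /= ?; rewrite lee_fin mulr_ge0.
- by apply: integral_ge0 => xi /= ?; rewrite lee_fin mulr_ge0 // oppr_ge0 ltW.
have mKM : measurable_fun setT (fun xi => ((K * M xi)%R)%:E).
  by apply/measurable_EFinP; exact: measurable_funM.
rewrite EFinM -integral_M -ge0_integralZl_EFin //; last 2 first.
- by move=> xi _; rewrite lee_fin.
- exact/measurable_EFinP.
rewrite -ge0_integral_half_lines //; last by move=> xi; rewrite lee_fin mulr_ge0.
apply: leeD; apply: integral_weighted_le.
- exact: measurable_half_line_ge0.
- by [].
- by move=> xi /= xi_ge0; rewrite xi_ge0 ger0_norm ?lexx.
- exact: measurable_half_line_lt0.
- exact: measurable_funN.
- by move=> xi /= xi_lt0; rewrite oppr_ge0 ltW //= ltr0_norm ?lexx.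
Qed.
End half_fluxes.

Lemma support_radius_ge0 (R : realType) (chi : R -> R) (wM : R) :
  (\int[@lebesgue_measure R]_w (chi w)%:E != 0)%E ->
  (forall w, chi w != 0 -> - wM <= w <= wM) -> 0 <= wM.
Proof.
move=> chi_int_neq0 chi_supp; rewrite leNgt; apply/negP => wM_lt0.
move: chi_int_neq0; rewrite (eq_integral (fun=> 0%E)) ?integral0 ?eqxx //.
move=> w _; have [->//|/chi_supp] := eqVneq (chi w) 0.
by rewrite -ler_norml => /(le_trans (normr_ge0 _)); rewrite leNgt wM_lt0.
Qed.

Section gibbs_density.
Variables (R : realType) (g : R) (l : nat -> R) (chi : R -> R).
Variables (H : int -> R) (u : nat -> int -> R) (wM : R).
Hypotheses (g_gt0 : 0 < g) (H_ge0 : forall j, 0 <= H j).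
Hypotheses (mchi : measurable_fun setT chi) (chi_ge0 : forall w, 0 <= chi w).
Hypothesis chi1 : (\int[@lebesgue_measure R]_w (chi w)%:E = 1)%E.
Hypothesis chi_supp : forall w, chi w != 0 -> - wM <= w <= wM.

Lemma cel_gt0 i : H i != 0 -> 0 < cel g H i.
Proof.
move=> Hi_neq0; rewrite sqrtr_gt0 divr_gt0 // mulr_gt0 //.
by rewrite lt_neqAle eq_sym Hi_neq0 H_ge0.
Qed.

Variables (a : nat) (i : int).
Hypothesis la_ge0 : 0 <= l a.

Local Notation M := (Mgibbs g l chi H u a).
Local Notation c := (cel g H i).

Lemma Mgibbs_ge0 j xi : 0 <= M j xi.
Proof.
rewrite /Mgibbs; case: ifP => // _.
by rewrite mulr_ge0 // divr_ge0 ?mulr_ge0 ?sqrtr_ge0.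
Qed.

Lemma measurable_Mgibbs : measurable_fun setT (M i).
Proof.
rewrite /Mgibbs; case: (H i == 0); first exact: measurable_cst.
apply: measurable_funM => //.
exact: measurableT_comp mchi (measurable_standardize (u a i) c).
Qed.

Lemma integral_Mgibbs :
  (\int[@lebesgue_measure R]_xi (M i xi)%:E = (l a * H i)%:E)%E.
Proof.
rewrite /Mgibbs; case: eqP => [->|/eqP Hi_neq0].
  by rewrite mulr0 integral0.
have c_gt0 := cel_gt0 i Hi_neq0.
under eq_integral do rewrite EFinM.
rewrite ge0_integralZl_EFin //; last first.
- by rewrite divr_ge0 ?mulr_ge0 // ltW.
- apply/measurable_EFinP; exact: measurableT_comp mchi (measurable_standardize _ _).
- by move=> xi _; rewrite lee_fin.
rewrite (@ge0_integral_standardize R (u a i) c c_gt0 (EFin \o chi)) //=.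
- by rewrite chi1 mule1 -EFinM divfK ?gt_eqF.
- exact/measurable_EFinP.
Qed.

Lemma Mgibbs_speed_bound xi : `|xi| * M i xi <= (`|u a i| + wM * c) * M i xi.
Proof.
rewrite /Mgibbs; case: ifP => Hi0; first by rewrite !mulr0.
have [->|/chi_supp] := eqVneq (chi ((xi - u a i) / c)) 0; first by rewrite !mulr0.
rewrite -ler_norml normrM normfV (gtr0_norm (cel_gt0 i (negbT Hi0))).
rewrite ler_pdivrMr ?cel_gt0 ?Hi0 // => dev_le.
apply: ler_wpM2r; first by have := Mgibbs_ge0 i xi; rewrite /Mgibbs Hi0.
rewrite -[X in `|X|](subrK (u a i)) addrC.
by rewrite (le_trans (ler_normD _ _)) // lerD2l.
Qed.

Lemma Flux_le : Flux g l chi H u a i <= l a * H i * (`|u a i| + wM * c).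
Proof.
have wM_ge0 : 0 <= wM by apply: support_radius_ge0 chi_supp; rewrite chi1.
have K_ge0 : 0 <= `|u a i| + wM * c by rewrite addr_ge0 ?mulr_ge0 ?sqrtr_ge0.
have := kinetic_flux_pos_sub_neg_le _ (Mgibbs_ge0 i) _ _
  measurable_Mgibbs K_ge0 integral_Mgibbs Mgibbs_speed_bound.
have := kinetic_flux_neg_le0 _ (Mgibbs_ge0 (i + 1)).
have := kinetic_flux_pos_ge0 _ (Mgibbs_ge0 (i - 1)).
rewrite /Flux /Fplus /Fminus /kinetic_flux_pos /kinetic_flux_neg mulrC; lra.
Qed.

End gibbs_density.

Section mass_exchange.
Variables (R : realType) (g : R) (N : nat) (l : nat -> R) (chi : R -> R).
Variables (dx : int -> R) (H : int -> R) (u : nat -> int -> R) (i : int).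
Hypotheses (dx_gt0 : 0 < dx i) (sum_l : \sum_(1 <= a < N.+1) l a = 1).

Local Notation F a := (Flux g l chi H u a i).
Local Notation S := (\sum_(1 <= p < N.+1) F p).
Local Notation G a := (Gex g N l chi dx H u a i).

Lemma dx_Gex a : (a <= N)%N -> dx i * G a = \sum_(1 <= j < a.+1) (F j - l j * S).
Proof.
move=> a_le_N; rewrite /Gex; case: ifP => [/orP[/eqP-> | N_le_a] | _].
- by rewrite big_geq // mulr0.
- have -> : a = N by apply/eqP; rewrite eqn_leq a_le_N N_le_a.
  by rewrite mulr0 sumrB -mulr_suml sum_l mul1r subrr.
- by rewrite mulrA mulfV ?mul1r // gt_eqF.
Qed.

Lemma Flux_exchange_balance a : (1 <= a <= N)%N ->
  F a - dx i * G a + dx i * G a.-1 = l a * S.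
Proof.
case: a => // a /= a_lt_N.
rewrite !dx_Gex ?(ltnW a_lt_N) // big_nat_recr //=.
ring.
Qed.

Lemma mulr_Hnew a dt : (1 <= a <= N)%N ->
  l a * Hnew g N l chi dx H u dt i
  = l a * H i - dt / dx i * (F a - dx i * G a + dx i * G a.-1).
Proof. by move=> a_range; rewrite Flux_exchange_balance // /Hnew mulrBr mulrCA. Qed.

End mass_exchange.

Lemma cfl_layer_ge0 (R : realFieldType) (h K F Gout Gin dx dt : R) :
  0 <= h -> 0 <= K -> 0 < dx -> 0 <= dt -> F <= h * K ->
  (let den := h * K + dx * (Num.max 0 (- Gout) + Num.max 0 Gin) in
   den != 0 -> dt <= h * dx / den) ->
  0 <= h - dt / dx * (F - dx * Gout + dx * Gin).
Proof.
move=> h_ge0 K_ge0 dx_gt0 dt_ge0 F_le /=.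
set den := (X in X != 0 -> _) => cfl.
have max_ge (x : R) : (0 <= Num.max 0 x) && (x <= Num.max 0 x) by rewrite !le_max !lexx orbT.
have /andP[? ?] := max_ge (- Gout); have /andP[? ?] := max_ge Gin.
have den_ge0 : 0 <= den by rewrite /den; nra.
have bal_le : F - dx * Gout + dx * Gin <= den by rewrite /den; nra.
have ratio_ge0 : 0 <= dt / dx by rewrite divr_ge0 // ltW.
rewrite subr_ge0; apply: le_trans (ler_wpM2l ratio_ge0 bal_le) _.
have [->|den_neq0] := eqVneq den 0; first by rewrite mulr0.
have den_gt0 : 0 < den by rewrite lt_neqAle eq_sym den_neq0.
by move: (cfl den_neq0); rewrite ler_pdivlMr // mulrAC ler_pdivrMr.
Qed.

Lemma Hnew_ge0 (R : realType) (g : R) (N : nat) (l : nat -> R) (chi : R -> R)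
    (wM : R) (dx : int -> R) (H : int -> R) (u : nat -> int -> R) (dt : R) :
  0 < g -> (forall a, (1 <= a <= N)%N -> 0 <= l a) ->
  \sum_(1 <= a < N.+1) l a = 1 ->
  measurable_fun setT chi -> (forall w, 0 <= chi w) ->
  (\int[@lebesgue_measure R]_w (chi w)%:E = 1)%E ->
  (forall w, chi w != 0 -> - wM <= w <= wM) ->
  (forall i, 0 < dx i) -> (forall i, 0 <= H i) -> 0 < dt ->
  CFL g N l chi dx H u wM dt -> forall i, 0 <= Hnew g N l chi dx H u dt i.
Proof.
move=> g_gt0 l_ge0 sum_l mchi chi_ge0 chi1 chi_supp dx_gt0 H_ge0 dt_gt0 cfl i.
have wM_ge0 : 0 <= wM by apply: support_radius_ge0 chi_supp; rewrite chi1.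
rewrite -[Hnew _ _ _ _ _ _ _ _ _]mul1r -sum_l mulr_suml big_nat_cond.
apply: sumr_ge0 => a /andP[/andP[a_ge1 a_le_N] _].
have a_range : (1 <= a <= N)%N by rewrite a_ge1 -ltnS.
rewrite mulr_Hnew //; apply: cfl_layer_ge0; last exact: cfl.
- by rewrite mulr_ge0 ?l_ge0.
- by rewrite addr_ge0 ?mulr_ge0 ?sqrtr_ge0.
- exact: dx_gt0.
- exact: ltW.
- by apply: Flux_le => //; exact: l_ge0.
Qed.

Theorem mainTheorem3 (R : realType) (g : R) (N : nat) (l : nat -> R)
  (chi : R -> R) (wM : R) (dx : int -> R) :
  0 < g -> (1 <= N)%N ->
  (forall alpha, (1 <= alpha <= N)%N -> 0 <= l alpha) ->
  \sum_(1 <= alpha < N.+1) l alpha = 1 ->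
  measurable_fun setT chi ->
  (forall w, chi (- w) = chi w) -> (forall w, 0 <= chi w) ->
  (\int[@lebesgue_measure R]_w (chi w)%:E = 1)%E ->
  (\int[@lebesgue_measure R]_w ((w ^+ 2 * chi w)%R)%:E = 1)%E ->
  (forall w, chi w != 0 -> -wM <= w <= wM) ->
  (forall i, 0 < dx i) ->
  (* one time step *)
  (forall (H : int -> R) (u : nat -> int -> R) (dt : R),
     (forall i, 0 <= H i) -> 0 < dt ->
     CFL g N l chi dx H u wM dt ->
     forall i, 0 <= Hnew g N l chi dx H u dt i)
  /\
  (* all time steps *)
  (forall (H : nat -> int -> R) (u : nat -> nat -> int -> R) (dt : nat -> R),
     (forall i, 0 <= H 0%N i) ->
     (forall n, 0 < dt n) ->
     (forall n, CFL g N l chi dx (H n) (u n) wM (dt n)) ->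
     (forall n i, H n.+1 i = Hnew g N l chi dx (H n) (u n) (dt n) i) ->
     forall n i, 0 <= H n i).
Proof.
move=> g_gt0 _ l_ge0 sum_l mchi _ chi_ge0 chi1 _ chi_supp dx_gt0.
have step H u dt := @Hnew_ge0 R g N l chi wM dx H u dt g_gt0 l_ge0 sum_l
  mchi chi_ge0 chi1 chi_supp dx_gt0.
split=> [H u dt H_ge0 dt_gt0 cfl i | H u dt H0_ge0 dt_gt0 cfl H_next]; first exact: step.
elim=> [|n IH] i; first exact: H0_ge0.
by rewrite H_next; apply: step.
Qed.
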